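(* Let $r>1$. For a positive integer $x$, let $q_r(x,x)$ be the probability that the CA competition process with fitness ratio $r$ started at $(x,x)$ satisfies $X_t\ne Y_t$ for all $t\ge1$. Then \[ q_r(x,x)\to\frac{r-1}{r+1}\quad\text{as } x\to\infty. \]
   Context: The CA competition process with fitness ratio $r\ge 1$ started at $(x_0,y_0)$ is the discrete-time Markov chain $\{(X_t,Y_t)\}_{t\ge0}$ on $\{(x,y)\in\mathbb{Z}^2: x\ge1,y\ge1\}$ with $(X_0,Y_0)=(x_0,y_0)$ and transition probabilities: from $(x,y)$ it moves to $(x+1,y)$ with probability $\frac{rx}{rx+y}$ and to $(x,y+1)$ with probability $\frac{y}{rx+y}$. *)

From Stdlib Require Import Reals.
From Coquelicot Require Import Coquelicot.
Open Scope R_scope.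

Definition p_right (r : R) (x y : nat) : R := r * INR x / (r * INR x + INR y).
Definition p_up (r : R) (x y : nat) : R := INR y / (r * INR x + INR y).

(* avoid_n r n x y = probability that the chain started at (x,y)
   satisfies X_t <> Y_t for all 1 <= t <= n (first-step decomposition
   of the law of the Markov chain). *)
Fixpoint avoid_n (r : R) (n : nat) (x y : nat) : R :=
  match n with
  | O => 1
  | S m =>
      p_right r x y * (if Nat.eqb (S x) y then 0 else avoid_n r m (S x) y)
    + p_up r x y * (if Nat.eqb x (S y) then 0 else avoid_n r m x (S y))
  end.

(* q_r(x,y) = P(X_t <> Y_t for all t >= 1), obtained by continuity of
   probability from above along the decreasing events
   {X_t <> Y_t for 1 <= t <= n}. *)
Definition q (r : R) (x y : nat) : R := real (Lim_seq (fun n => avoid_n r n x y)).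

(* Lower bound: from [(y + d, y)] the difference [X_t - Y_t] steps up at least
   [r] times as often as it steps down, so it never returns to [0] with
   probability at least [1 - r^-d]; the first step from [(x, x)] goes right with
   probability [r / (r + 1)], which gives [(r - 1) / (r + 1)].

   Upper bound: once both coordinates exceed a large [X], within distance [K] of the
   diagonal the ratio of down to up steps of the difference is at least about
   [1 / r], so from [(x + 1, x)] the difference reaches [K] before [0] with
   probability at most about [(1 - 1/r) / (1 - r^-K)] (a gambler's ruin bound).
   From [(x, x + 1)], exchanging the two types ([avoid_n r x y = avoid_n (/r) y x])
   gives a difference drifting back to [0] with ratio [(1 + r) / 2 > 1], which
   reaches [K'] before [0] with probability at most [1 / K']. A Lyapunov function
   [beta ^ +-d] shows the finite-horizon probabilities [avoid_n] obey these
   bounds up to an error [O(mu ^ n)], [mu < 1]. Letting [x], then [K] and [K'],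
   grow gives the limit. *)

From Stdlib Require Import Reals Lra Lia Psatz.
From Coquelicot Require Import Coquelicot.
Open Scope R_scope.

Lemma transition_denom_pos r x y : 0 < r -> (1 <= x + y)%nat ->
  0 < r * INR x + INR y.
Proof.
  intros Hr Hxy.
  destruct x as [|x].
  - assert (1 <= INR y) by (apply (le_INR 1); lia). simpl; lra.
  - assert (1 <= INR (S x)) by (apply (le_INR 1); lia).
    assert (0 <= INR y) by apply pos_INR. nra.
Qed.

Lemma transition_probs r x y : 0 < r -> (1 <= x + y)%nat ->
  0 <= p_right r x y /\ 0 <= p_up r x y /\ p_right r x y + p_up r x y = 1.
Proof.
  intros Hr Hxy; unfold p_right, p_up.
  pose proof (transition_denom_pos r x y Hr Hxy).
  assert (0 <= INR x) by apply pos_INR.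
  assert (0 <= INR y) by apply pos_INR.
  repeat split; [apply Rdiv_le_0_compat; nra | apply Rdiv_le_0_compat; lra | field; lra].
Qed.

Lemma p_up_swap r x y : 0 < r -> (1 <= x + y)%nat -> p_up r x y = p_right (/ r) y x.
Proof.
  intros Hr Hxy; unfold p_right, p_up.
  pose proof (transition_denom_pos r x y Hr Hxy).
  assert (0 < / r * INR y + INR x).
  { replace (/ r * INR y + INR x) with ((r * INR x + INR y) / r) by (field; lra).
    apply Rdiv_lt_0_compat; lra. }
  field; lra.
Qed.

Lemma p_right_swap r x y : 0 < r -> (1 <= x + y)%nat -> p_right r x y = p_up (/ r) y x.
Proof.
  intros Hr Hxy.
  rewrite (p_up_swap (/ r) y x) by (first [apply Rinv_0_lt_compat; exact Hr | lia]).
  now rewrite Rinv_inv.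
Qed.

Lemma avoid_n_bounds r n x y : 0 < r -> (1 <= x + y)%nat -> 0 <= avoid_n r n x y <= 1.
Proof.
  intros Hr; revert x y; induction n as [|n IH]; intros x y Hxy; [simpl; lra|].
  cbn [avoid_n].
  destruct (transition_probs r x y Hr Hxy) as [Ha [Hb Hab]].
  assert (0 <= (if Nat.eqb (S x) y then 0 else avoid_n r n (S x) y) <= 1)
    by (destruct (Nat.eqb (S x) y); [lra | apply IH; lia]).
  assert (0 <= (if Nat.eqb x (S y) then 0 else avoid_n r n x (S y)) <= 1)
    by (destruct (Nat.eqb x (S y)); [lra | apply IH; lia]).
  split; nra.
Qed.

Lemma avoid_n_swap r n x y : 0 < r -> (1 <= x + y)%nat ->
  avoid_n r n x y = avoid_n (/ r) n y x.
Proof.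
  intros Hr; revert x y; induction n as [|n IH]; intros x y Hxy; [reflexivity|].
  cbn [avoid_n].
  rewrite (p_right_swap r x y), (p_up_swap r x y), (IH (S x) y), (IH x (S y)),
    (Nat.eqb_sym (S x) y), (Nat.eqb_sym x (S y)) by (first [exact Hr | lia]).
  ring.
Qed.

Lemma p_right_mul_le_p_up r x y c : 0 < r -> (1 <= x + y)%nat ->
  c * (r * INR x) <= INR y -> p_right r x y * c <= p_up r x y.
Proof.
  intros Hr Hxy H; unfold p_right, p_up.
  pose proof (transition_denom_pos r x y Hr Hxy).
  replace (r * INR x / (r * INR x + INR y) * c)
    with (c * (r * INR x) / (r * INR x + INR y)) by (field; lra).
  apply Rmult_le_compat_r; [left; apply Rinv_0_lt_compat|]; lra.
Qed.

Lemma p_up_mul_le_p_right r x y c : 0 < r -> (1 <= x + y)%nat ->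
  c * INR y <= r * INR x -> p_up r x y * c <= p_right r x y.
Proof.
  intros Hr Hxy H; unfold p_right, p_up.
  pose proof (transition_denom_pos r x y Hr Hxy).
  replace (INR y / (r * INR x + INR y) * c)
    with (c * INR y / (r * INR x + INR y)) by (field; lra).
  apply Rmult_le_compat_r; [left; apply Rinv_0_lt_compat|]; lra.
Qed.

Fixpoint geom_sum (rho : R) (n : nat) : R :=
  match n with
  | O => 0
  | S n => geom_sum rho n + rho ^ n
  end.

Lemma geom_sum_mul rho n : (1 - rho) * geom_sum rho n = 1 - rho ^ n.
Proof.
  induction n as [|n IH]; [simpl; ring|].
  simpl; rewrite Rmult_plus_distr_l, IH; ring.
Qed.

Lemma geom_sum_nonneg rho n : 0 <= rho -> 0 <= geom_sum rho n.
Proof.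
  intros Hrho; induction n as [|n IH]; [simpl; lra|].
  pose proof (pow_le rho n Hrho); simpl; lra.
Qed.

Lemma geom_sum_pos rho n : 0 <= rho -> (0 < n)%nat -> 0 < geom_sum rho n.
Proof.
  intros Hrho Hn; destruct n as [|n]; [lia|].
  enough (1 <= geom_sum rho (S n)) by lra.
  induction n as [|n IH]; [simpl; lra|].
  pose proof (pow_le rho (S n) Hrho).
  assert (1 <= geom_sum rho (S n)) by (apply IH; lia).
  simpl in *; lra.
Qed.

Lemma geom_sum_ge_INR rho n : 1 <= rho -> INR n <= geom_sum rho n.
Proof.
  intros Hrho; induction n as [|n IH]; [simpl; lra|].
  rewrite S_INR; pose proof (pow_R1_Rle rho n Hrho); simpl; lra.
Qed.

(* [geom_sum rho] is harmonic for the walk with [P(up) = a], [P(down) = b]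
   exactly when [a * rho = b]; otherwise the defect has the sign of [a * rho - b]. *)
Lemma geom_sum_step rho a b d : a + b = 1 ->
  a * geom_sum rho (S (S d)) + b * geom_sum rho d
  = geom_sum rho (S d) + rho ^ d * (a * rho - b).
Proof. intros Hab; simpl; replace b with (1 - a) by lra; ring. Qed.

(* Probability that a walk on [0..K] with [P(down) / P(up) = rho] started at [d]
   reaches [K] before [0]; it is capped at [1] from [K] on. *)
Definition ruin (rho : R) (K d : nat) : R :=
  if Nat.leb K d then 1 else geom_sum rho d / geom_sum rho K.

Lemma ruin_below rho K d : 0 <= rho -> (0 < K)%nat -> (d <= K)%nat ->
  ruin rho K d = geom_sum rho d / geom_sum rho K.
Proof.
  intros Hrho HK Hd; unfold ruin.
  destruct (Nat.leb K d) eqn:E; [|reflexivity].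
  apply Nat.leb_le in E; replace d with K by lia.
  pose proof (geom_sum_pos rho K Hrho HK); field; lra.
Qed.

Lemma ruin_nonneg rho K d : 0 <= rho -> 0 <= ruin rho K d.
Proof.
  intros Hrho; unfold ruin; destruct (Nat.leb K d) eqn:E; [lra|].
  apply Nat.leb_gt in E.
  apply Rdiv_le_0_compat; [apply geom_sum_nonneg | apply geom_sum_pos]; lia || lra.
Qed.

Lemma ruin_step rho K a b d : 0 <= rho -> a + b = 1 -> a * rho <= b -> (S d < K)%nat ->
  a * ruin rho K (S (S d)) + b * ruin rho K d <= ruin rho K (S d).
Proof.
  intros Hrho Hab Hab' Hd.
  rewrite !ruin_below by (first [exact Hrho | lia]).
  pose proof (geom_sum_pos rho K Hrho ltac:(lia)).
  pose proof (pow_le rho d Hrho).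
  replace (a * (geom_sum rho (S (S d)) / geom_sum rho K) + b * (geom_sum rho d / geom_sum rho K))
    with ((geom_sum rho (S d) + rho ^ d * (a * rho - b)) / geom_sum rho K)
    by (rewrite <- geom_sum_step by exact Hab; field; lra).
  apply Rmult_le_compat_r; [left; apply Rinv_0_lt_compat; lra | nra].
Qed.

Lemma ruin_one rho K : 0 <= rho -> (1 < K)%nat -> ruin rho K 1 = / geom_sum rho K.
Proof.
  intros Hrho HK; rewrite ruin_below by (first [exact Hrho | lia]).
  simpl; unfold Rdiv; ring.
Qed.

Definition avoid_ahead (r : R) (n y d : nat) : R :=
  if Nat.eqb d 0 then 0 else avoid_n r n (y + d) y.

Lemma avoid_ahead_diag r n y : avoid_ahead r n y 0 = 0.
Proof. reflexivity. Qed.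

Lemma avoid_ahead_init r y d : avoid_ahead r 0 y (S d) = 1.
Proof. reflexivity. Qed.

Lemma avoid_ahead_succ r n y d :
  avoid_ahead r (S n) y (S d) =
  p_right r (y + S d) y * avoid_ahead r n y (S (S d))
  + p_up r (y + S d) y * avoid_ahead r n (S y) d.
Proof.
  unfold avoid_ahead; cbn [avoid_n].
  change (Nat.eqb (S d) 0) with false; change (Nat.eqb (S (S d)) 0) with false.
  replace (Nat.eqb (S (y + S d)) y) with false by (symmetry; apply Nat.eqb_neq; lia).
  replace (y + S (S d))%nat with (S (y + S d)) by lia.
  destruct d as [|d].
  - change (Nat.eqb 0 0) with true.
    replace (Nat.eqb (y + 1) (S y)) with true by (symmetry; apply Nat.eqb_eq; lia).
    reflexivity.
  - change (Nat.eqb (S d) 0) with false.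
    replace (Nat.eqb (y + S (S d)) (S y)) with false by (symmetry; apply Nat.eqb_neq; lia).
    now replace (S y + S d)%nat with (y + S (S d))%nat by lia.
Qed.

Lemma avoid_ahead_bounds r n y d : 0 < r -> 0 <= avoid_ahead r n y d <= 1.
Proof.
  intros Hr; unfold avoid_ahead; destruct (Nat.eqb d 0) eqn:E; [lra|].
  apply Nat.eqb_neq in E; apply avoid_n_bounds; [exact Hr | lia].
Qed.

Lemma avoid_ahead_ge r n y d : 1 <= r -> 1 - (/ r) ^ d <= avoid_ahead r n y d.
Proof.
  intros Hr; set (rho := / r).
  assert (Hrho : 0 <= rho <= 1).
  { unfold rho; split; [left; apply Rinv_0_lt_compat; lra|].
    rewrite <- Rinv_1; apply Rinv_le_contravar; lra. }
  revert y d; induction n as [|n IH]; intros y d.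
  - unfold avoid_ahead; destruct d as [|d]; simpl; [lra|].
    pose proof (pow_le rho d (proj1 Hrho)); nra.
  - destruct d as [|d]; [unfold avoid_ahead; simpl; lra|].
    rewrite avoid_ahead_succ.
    destruct (transition_probs r (y + S d) y ltac:(lra) ltac:(lia)) as [Ha [Hb Hab]].
    set (a := p_right r (y + S d) y) in *; set (b := p_up r (y + S d) y) in *.
    assert (Hdrift : b <= a * rho).
    { assert (b * r <= a) by (apply p_up_mul_le_p_right; [lra | lia |];
        rewrite plus_INR; pose proof (pos_INR (S d)); nra).
      unfold rho; apply Rmult_le_reg_r with r; [lra|].
      rewrite Rmult_assoc, Rinv_l by lra; lra. }
    pose proof (IH y (S (S d))) as HA; pose proof (IH (S y) d) as HB.
    rewrite <- !geom_sum_mul in *.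
    pose proof (geom_sum_step rho a b d Hab) as Hstep.
    pose proof (pow_le rho d (proj1 Hrho)).
    assert (0 <= (1 - rho) * (rho ^ d * (a * rho - b))) by
      (apply Rmult_le_pos; [lra | apply Rmult_le_pos; lra]).
    nra.
Qed.

(* Comparison with the walk killed at [K]: as long as the process stays in the
   strip [0 < d < K] above level [y0], its difference is dominated by a walk with
   step ratio [rho], whence the [ruin] term; [gamma ^ d] is a Lyapunov function
   contracting by [mu] per step, which controls the time spent in the strip. *)
Section Barrier.

Variables (r rho gamma mu M : R) (K y0 : nat).
Hypotheses (r_pos : 0 < r) (rho_ge0 : 0 <= rho) (gamma_pos : 0 < gamma)
  (mu_ge0 : 0 <= mu) (M_ge0 : 0 <= M).
Hypothesis M_init : forall d, (d < K)%nat -> 1 <= M * gamma ^ d.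
Hypothesis strip_ratio : forall y d, (y0 <= y)%nat -> (0 < d < K)%nat ->
  p_right r (y + d) y * rho <= p_up r (y + d) y.
Hypothesis strip_drift : forall y d, (y0 <= y)%nat -> (0 < d < K)%nat ->
  p_right r (y + d) y * gamma + p_up r (y + d) y / gamma <= mu.

Lemma barrier_nonneg n d : 0 <= ruin rho K d + mu ^ n * M * gamma ^ d.
Proof.
  pose proof (ruin_nonneg rho K d rho_ge0).
  pose proof (pow_le mu n mu_ge0); pose proof (pow_le gamma d (Rlt_le _ _ gamma_pos)).
  assert (0 <= mu ^ n * M) by nra; nra.
Qed.

Lemma barrier_ge_one n d : (K <= d)%nat -> 1 <= ruin rho K d + mu ^ n * M * gamma ^ d.
Proof.
  intros HK; pose proof (pow_le mu n mu_ge0); pose proof (pow_le gamma d (Rlt_le _ _ gamma_pos)).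
  assert (0 <= mu ^ n * M) by nra.
  unfold ruin; rewrite (proj2 (Nat.leb_le K d) HK); nra.
Qed.

Lemma barrier_step n d a b : 0 <= a -> 0 <= b -> a + b = 1 -> a * rho <= b ->
  a * gamma + b / gamma <= mu -> (S d < K)%nat ->
  a * (ruin rho K (S (S d)) + mu ^ n * M * gamma ^ S (S d))
  + b * (ruin rho K d + mu ^ n * M * gamma ^ d)
  <= ruin rho K (S d) + mu ^ S n * M * gamma ^ S d.
Proof.
  intros Ha Hb Hab Hratio Hdrift HK.
  pose proof (ruin_step rho K a b d rho_ge0 Hab Hratio HK).
  assert (Hpow : a * gamma ^ S (S d) + b * gamma ^ d
                 = gamma ^ S d * (a * gamma + b / gamma)) by (simpl; field; lra).
  assert (0 <= mu ^ n * M * gamma ^ S d)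
    by (pose proof (pow_le mu n mu_ge0); pose proof (pow_le gamma (S d) (Rlt_le _ _ gamma_pos));
        apply Rmult_le_pos; [apply Rmult_le_pos|]; lra).
  assert (mu ^ n * M * (a * gamma ^ S (S d) + b * gamma ^ d)
          <= mu ^ S n * M * gamma ^ S d).
  { rewrite Hpow.
    replace (mu ^ S n * M * gamma ^ S d) with (mu ^ n * M * gamma ^ S d * mu) by (simpl; ring).
    replace (mu ^ n * M * (gamma ^ S d * (a * gamma + b / gamma)))
      with (mu ^ n * M * gamma ^ S d * (a * gamma + b / gamma)) by ring.
    apply Rmult_le_compat_l; assumption. }
  nra.
Qed.

Lemma avoid_ahead_le_barrier n y d : (y0 <= y)%nat ->
  avoid_ahead r n y d <= ruin rho K d + mu ^ n * M * gamma ^ d.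
Proof.
  revert y d; induction n as [|n IH]; intros y d Hy;
    (destruct d as [|d]; [rewrite avoid_ahead_diag; apply barrier_nonneg|]);
    (destruct (Compare_dec.le_lt_dec K (S d)) as [HK|HK];
      [eapply Rle_trans; [apply avoid_ahead_bounds, r_pos | apply barrier_ge_one, HK]|]).
  - rewrite avoid_ahead_init, pow_O, Rmult_1_l.
    pose proof (ruin_nonneg rho K (S d) rho_ge0); pose proof (M_init (S d) HK); lra.
  - rewrite avoid_ahead_succ.
    destruct (transition_probs r (y + S d) y r_pos ltac:(lia)) as [Ha [Hb Hab]].
    eapply Rle_trans; [|apply (barrier_step n d _ _ Ha Hb Hab);
      [apply strip_ratio | apply strip_drift | ]; lia].
    apply Rplus_le_compat; apply Rmult_le_compat_l; try apply IH; lia || lra.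
Qed.

End Barrier.

Lemma contraction_factor theta : 1 < theta -> exists beta mu,
  1 < beta /\ 0 <= mu < 1 /\
  forall a b, 0 <= a -> 0 <= b -> a + b = 1 -> theta * b <= a -> a / beta + b * beta <= mu.
Proof.
  intros Hth; set (beta := (1 + theta) / 2).
  assert (Hb : 1 < beta < theta) by (unfold beta; lra).
  (* [a / beta + (1 - a) * beta] decreases in [a]; [mu] is its value at the
     least admissible [a], namely [theta / (1 + theta)]. *)
  exists beta, ((theta / beta + beta) / (1 + theta)).
  assert (0 < theta / beta) by (apply Rdiv_lt_0_compat; lra).
  assert (Hmu : theta / beta + beta - (1 + theta) = (beta - 1) * (beta - theta) / beta)
    by (field; lra).
  assert ((beta - 1) * (beta - theta) / beta < 0)
    by (apply Rdiv_neg_pos; [nra | lra]).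
  split; [lra|]; split; [split|].
  - apply Rdiv_le_0_compat; lra.
  - apply Rmult_lt_reg_r with (1 + theta); [lra|].
    unfold Rdiv; rewrite Rmult_assoc, Rinv_l by lra; lra.
  - intros a b Ha Hb' Hab Hta.
    assert (Hdiff : a / beta + b * beta - (theta / beta + beta) / (1 + theta)
                    = (a * (1 + theta) - theta) / (1 + theta) * (/ beta - beta))
      by (replace b with (1 - a) by lra; field; lra).
    assert (theta * b = theta - theta * a) by (replace b with (1 - a) by lra; ring).
    assert (0 <= (a * (1 + theta) - theta) / (1 + theta))
      by (apply Rdiv_le_0_compat; lra).
    assert (/ beta < 1) by (rewrite <- Rinv_1; apply Rinv_lt_contravar; lra).
    nra.
Qed.

Lemma avoid_n_diag r n z : 0 < r -> (1 <= z)%nat ->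
  avoid_n r (S n) z z =
  p_right r z z * avoid_ahead r n z 1 + p_up r z z * avoid_ahead (/ r) n z 1.
Proof.
  intros Hr Hz; cbn [avoid_n]; unfold avoid_ahead; change (Nat.eqb 1 0) with false.
  replace (Nat.eqb (S z) z) with false by (symmetry; apply Nat.eqb_neq; lia).
  replace (Nat.eqb z (S z)) with false by (symmetry; apply Nat.eqb_neq; lia).
  rewrite (avoid_n_swap r n z (S z) Hr ltac:(lia)).
  now replace (z + 1)%nat with (S z) by lia.
Qed.

Section Contraction.

Variables (r theta beta mu : R) (z : nat).
Hypotheses (r_gt1 : 1 < r) (beta_gt1 : 1 < beta)
  (mu_ge0 : 0 <= mu) (z_pos : (1 <= z)%nat).
Hypothesis contraction : forall a b, 0 <= a -> 0 <= b -> a + b = 1 -> theta * b <= a ->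
  a / beta + b * beta <= mu.

Lemma avoid_ahead_fitter_le rho K n : theta <= r -> 0 <= rho ->
  (forall y d, (z <= y)%nat -> (0 < d < K)%nat -> rho * (r * INR (y + d)) <= INR y) ->
  avoid_ahead r n z 1 <= ruin rho K 1 + mu ^ n * beta ^ K * / beta.
Proof.
  intros Htheta Hrho Hstrip.
  rewrite <- (pow_1 (/ beta)).
  apply (avoid_ahead_le_barrier r rho (/ beta) mu (beta ^ K) K z);
    try lia; try lra; try (apply Rinv_0_lt_compat; lra); try (apply pow_le; lra).
  - intros d Hd; rewrite pow_inv.
    replace K with ((K - d) + d)%nat by lia; rewrite pow_add.
    rewrite Rmult_assoc, Rinv_r by (apply pow_nonzero; lra); rewrite Rmult_1_r.
    apply pow_R1_Rle; lra.
  - intros y d Hy Hd; apply p_right_mul_le_p_up; [lra | lia | apply Hstrip; [exact Hy | lia]].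
  - intros y d Hy Hd.
    destruct (transition_probs r (y + d) y ltac:(lra) ltac:(lia)) as [Ha [Hb Hab]].
    assert (p_up r (y + d) y * theta <= p_right r (y + d) y).
    { apply p_up_mul_le_p_right; [lra | lia |].
      rewrite plus_INR; pose proof (pos_INR y); pose proof (pos_INR d); nra. }
    replace (p_right r (y + d) y * / beta + p_up r (y + d) y / / beta)
      with (p_right r (y + d) y / beta + p_up r (y + d) y * beta) by (field; lra).
    apply contraction; lra.
Qed.

Lemma avoid_ahead_less_fit_le K n : 0 <= theta ->
  (forall y d, (z <= y)%nat -> (0 < d < K)%nat -> theta * INR (y + d) <= r * INR y) ->
  avoid_ahead (/ r) n z 1 <= ruin theta K 1 + mu ^ n * beta.
Proof.
  intros Htheta Hstrip.
  replace (mu ^ n * beta) with (mu ^ n * 1 * beta ^ 1) by ring.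
  apply (avoid_ahead_le_barrier (/ r) theta beta mu 1 K z);
    try lia; try lra; try (apply Rinv_0_lt_compat; lra).
  - intros d _; rewrite Rmult_1_l; apply pow_R1_Rle; lra.
  - intros y d Hy Hd.
    apply p_right_mul_le_p_up; [apply Rinv_0_lt_compat; lra | lia |].
    pose proof (Hstrip y d Hy Hd).
    replace (theta * (/ r * INR (y + d))) with (theta * INR (y + d) / r) by (field; lra).
    apply Rmult_le_reg_r with r; [lra|].
    unfold Rdiv; rewrite Rmult_assoc, Rinv_l by lra; lra.
  - intros y d Hy Hd.
    rewrite <- (p_up_swap r y (y + d)), <- (p_right_swap r y (y + d)) by (lra || lia).
    destruct (transition_probs r y (y + d) ltac:(lra) ltac:(lia)) as [Ha [Hb Hab]].
    assert (p_up r y (y + d) * theta <= p_right r y (y + d))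
      by (apply p_up_mul_le_p_right; [lra | lia | apply Hstrip; [exact Hy | exact Hd]]).
    pose proof (contraction _ _ Ha Hb Hab ltac:(lra)); lra.
Qed.

End Contraction.

Lemma p_right_diag r z : 0 < r -> (1 <= z)%nat -> p_right r z z = r / (r + 1).
Proof.
  intros Hr Hz; unfold p_right.
  assert (0 < INR z) by (apply lt_0_INR; lia).
  field; split; nra.
Qed.

Lemma p_up_diag r z : 0 < r -> (1 <= z)%nat -> p_up r z z = / (r + 1).
Proof.
  intros Hr Hz; unfold p_up.
  assert (0 < INR z) by (apply lt_0_INR; lia).
  field; split; nra.
Qed.

Lemma real_Lim_seq_between (u v : nat -> R) (lo hi : R) :
  (forall n, lo <= u n) -> (forall n, u (S n) <= v n) -> is_lim_seq v hi ->
  lo <= real (Lim_seq u) <= hi.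
Proof.
  intros Hlo Hhi Hv.
  assert (Hl : Rbar_le (Lim_seq (fun _ => lo)) (Lim_seq u))
    by (apply Lim_seq_le_loc; exists 0%nat; intros n _; apply Hlo).
  assert (Hh : Rbar_le (Lim_seq (fun n => u (S n))) (Lim_seq v))
    by (apply Lim_seq_le_loc; exists 0%nat; intros n _; apply Hhi).
  rewrite Lim_seq_const in Hl; rewrite Lim_seq_incr_1, (is_lim_seq_unique v hi Hv) in Hh.
  destruct (Lim_seq u); simpl in *; [split; lra | contradiction | contradiction].
Qed.

Lemma q_diag_between r z B C mu : 1 < r -> (1 <= z)%nat -> 0 <= mu < 1 ->
  (forall n, avoid_n r (S n) z z <= B + C * mu ^ n) ->
  (r - 1) / (r + 1) <= q r z z <= B.
Proof.
  intros Hr Hz Hmu Hup; unfold q.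
  apply (real_Lim_seq_between _ (fun n => B + C * mu ^ n)); [| exact Hup |].
  - intros [|n]; [simpl; apply Rmult_le_reg_r with (r + 1); [lra|];
                  unfold Rdiv; rewrite Rmult_assoc, Rinv_l; lra|].
    rewrite avoid_n_diag, p_right_diag, p_up_diag by (lra || lia).
    pose proof (avoid_ahead_ge r n z 1 ltac:(lra)).
    pose proof (avoid_ahead_bounds (/ r) n z 1 ltac:(apply Rinv_0_lt_compat; lra)).
    assert (r / (r + 1) * (1 - (/ r) ^ 1) = (r - 1) / (r + 1)) by (simpl; field; lra).
    assert (0 <= / (r + 1)) by (left; apply Rinv_0_lt_compat; lra).
    assert (0 <= r / (r + 1)) by (apply Rdiv_le_0_compat; lra).
    nra.
  - assert (Hgeom : is_lim_seq (fun n => B + C * mu ^ n) (B + C * 0)).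
    { apply is_lim_seq_plus'; [apply is_lim_seq_const|].
      apply (is_lim_seq_scal_l _ C 0), is_lim_seq_geom; rewrite Rabs_pos_eq; lra. }
    now rewrite Rmult_0_r, Rplus_0_r in Hgeom.
Qed.

Lemma ruin_one_le_inv rho K : 1 <= rho -> (0 < K)%nat -> ruin rho K 1 <= / INR K.
Proof.
  intros Hrho HK; destruct (Nat.eq_dec K 1) as [->|HK1].
  - unfold ruin; simpl; lra.
  - rewrite ruin_one by (lra || lia).
    pose proof (geom_sum_ge_INR rho K Hrho).
    apply Rinv_le_contravar; [apply lt_0_INR; lia | exact H].
Qed.

Lemma ruin_fitter_one_le r K X delta : 1 < r -> (1 < K)%nat -> INR K < X ->
  (/ r) ^ K <= delta < 1 ->
  r / (r + 1) * ruin ((X - INR K) / (r * X)) K 1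
  <= ((r - 1) / (r + 1) + INR K / ((r + 1) * X)) / (1 - delta).
Proof.
  intros Hr HK HX Hdelta; set (rho := (X - INR K) / (r * X)).
  pose proof (pos_INR K).
  assert (Hrho : 0 <= rho <= / r).
  { unfold rho; split; [apply Rdiv_le_0_compat; nra|].
    assert (/ r - (X - INR K) / (r * X) = INR K / (r * X)) by (field; lra).
    assert (0 <= INR K / (r * X)) by (apply Rdiv_le_0_compat; nra); lra. }
  assert (HrhoK : rho ^ K <= delta) by (apply Rle_trans with ((/ r) ^ K); [apply pow_incr; lra | lra]).
  pose proof (geom_sum_mul rho K) as Hmul.
  pose proof (geom_sum_pos rho K ltac:(lra) ltac:(lia)).
  assert (/ r < 1) by (rewrite <- Rinv_1; apply Rinv_lt_contravar; lra).
  rewrite ruin_one by (lra || lia).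
  assert (Hinv : / geom_sum rho K = (1 - rho) / (1 - rho ^ K))
    by (rewrite <- Hmul; field; split; lra).
  assert (Hlin : r / (r + 1) * (1 - rho) = (r - 1) / (r + 1) + INR K / ((r + 1) * X))
    by (unfold rho; field; split; lra).
  rewrite Hinv.
  replace (r / (r + 1) * ((1 - rho) / (1 - rho ^ K)))
    with (r / (r + 1) * (1 - rho) / (1 - rho ^ K)) by (field; lra).
  rewrite Hlin.
  apply Rmult_le_compat_l.
  - assert (0 <= INR K / ((r + 1) * X)) by (apply Rdiv_le_0_compat; nra).
    assert (0 <= (r - 1) / (r + 1)) by (apply Rdiv_le_0_compat; lra); lra.
  - apply Rinv_le_contravar; lra.
Qed.

Lemma fitter_strip r K X y d : 0 < r -> INR K < X -> X <= INR y -> (d < K)%nat ->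
  (X - INR K) / (r * X) * (r * INR (y + d)) <= INR y.
Proof.
  intros Hr HXK HXy Hd.
  pose proof (pos_INR K); pose proof (pos_INR d).
  assert (INR d <= INR K) by (apply le_INR; lia).
  rewrite plus_INR; set (w := INR y + INR d).
  assert (Hw : (X - INR K) / (r * X) * (r * w) = w - w * INR K / X) by (field; lra).
  assert (INR K <= w * INR K / X).
  { apply Rmult_le_reg_r with X; [lra|].
    unfold Rdiv; rewrite Rmult_assoc, Rinv_l by lra; unfold w; nra. }
  unfold w in *; lra.
Qed.

Lemma q_diag_le r K K' x : 1 < r -> (1 < K)%nat -> (0 < K')%nat ->
  INR K < INR (S x) -> (1 + r) * INR K' < (r - 1) * INR (S x) ->
  q r (S x) (S x) <=
  r / (r + 1) * ruin ((INR (S x) - INR K) / (r * INR (S x))) K 1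
  + / (r + 1) * ruin ((1 + r) / 2) K' 1.
Proof.
  intros Hr HK HK' HXK HXK'.
  set (X := INR (S x)) in *; set (rho := (X - INR K) / (r * X)).
  set (theta := (1 + r) / 2).
  destruct (contraction_factor theta ltac:(unfold theta; lra))
    as [beta [mu [Hbeta [Hmu Hcontr]]]].
  pose proof (pos_INR K); pose proof (pos_INR K').
  assert (HX : forall y, (S x <= y)%nat -> X <= INR y) by (intros y Hy; apply le_INR, Hy).
  assert (Hfit : forall y d, (S x <= y)%nat -> (0 < d < K)%nat ->
                   rho * (r * INR (y + d)) <= INR y)
    by (intros y d Hy Hd; apply fitter_strip; [lra | lra | apply HX, Hy | lia]).
  assert (Hless_fit : forall y d, (S x <= y)%nat -> (0 < d < K')%nat ->
                        theta * INR (y + d) <= r * INR y).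
  { intros y d Hy Hd; pose proof (HX y Hy).
    assert (INR d <= INR K') by (apply le_INR; lia).
    rewrite plus_INR; unfold theta; nra. }
  assert (Hrho : 0 <= rho) by (unfold rho; apply Rdiv_le_0_compat; nra).
  apply (q_diag_between r (S x) _ (r / (r + 1) * (beta ^ K * / beta) + / (r + 1) * beta) mu);
    [lra | lia | lra |].
  intros n; rewrite avoid_n_diag, p_right_diag, p_up_diag by (lra || lia).
  pose proof (avoid_ahead_fitter_le r theta beta mu (S x) ltac:(lra) Hbeta (proj1 Hmu)
                ltac:(lia) Hcontr rho K n ltac:(unfold theta; lra) Hrho Hfit).
  pose proof (avoid_ahead_less_fit_le r theta beta mu (S x) ltac:(lra) Hbeta (proj1 Hmu)
                ltac:(lia) Hcontr K' n ltac:(unfold theta; lra) Hless_fit).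
  assert (0 <= r / (r + 1)) by (apply Rdiv_le_0_compat; lra).
  assert (0 <= / (r + 1)) by (left; apply Rinv_0_lt_compat; lra).
  nra.
Qed.

Lemma q_diag_ge r z : 1 < r -> (1 <= z)%nat -> (r - 1) / (r + 1) <= q r z z.
Proof.
  intros Hr Hz; apply (q_diag_between r z 1 0 0 Hr Hz ltac:(lra)).
  intros n; pose proof (avoid_n_bounds r (S n) z z ltac:(lra) ltac:(lia)); lra.
Qed.

Lemma fitter_term_le r eps : 1 < r -> 0 < eps -> exists K, (1 < K)%nat /\
  forall X, INR K < X -> 8 * INR K < eps * X ->
  r / (r + 1) * ruin ((X - INR K) / (r * X)) K 1 <= (r - 1) / (r + 1) + 3 * eps / 4.
Proof.
  intros Hr Heps.
  set (delta := Rmin (1 / 2) (eps / 8)).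
  assert (Hdelta : 0 < delta <= 1 / 2 /\ delta <= eps / 8)
    by (unfold delta; repeat split; [apply Rmin_pos; lra | apply Rmin_l | apply Rmin_r]).
  assert (Hinv_r : 0 <= / r < 1)
    by (split; [left; apply Rinv_0_lt_compat; lra | rewrite <- Rinv_1; apply Rinv_lt_contravar; lra]).
  destruct (pow_lt_1_zero (/ r) ltac:(rewrite Rabs_pos_eq; lra) delta ltac:(lra)) as [K0 HK0].
  exists (Nat.max K0 2); split; [lia|]; set (K := Nat.max K0 2); intros X HXK HXeps.
  assert (HrK : (/ r) ^ K <= delta).
  { pose proof (HK0 K ltac:(unfold K; lia)) as HK.
    rewrite Rabs_pos_eq in HK by (apply pow_le; lra); lra. }
  pose proof (pos_INR K).
  eapply Rle_trans; [apply (ruin_fitter_one_le r K X delta); [lra | unfold K; lia | lra | lra]|].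
  set (L := (r - 1) / (r + 1)); set (t := INR K / ((r + 1) * X)).
  assert (HL : 0 <= L <= 1).
  { unfold L; split; [apply Rdiv_le_0_compat; lra|].
    apply Rmult_le_reg_r with (r + 1); [lra|].
    unfold Rdiv; rewrite Rmult_assoc, Rinv_l; lra. }
  assert (Ht : t <= eps / 8).
  { unfold t; apply Rmult_le_reg_r with ((r + 1) * X); [nra|].
    unfold Rdiv; rewrite Rmult_assoc, Rinv_l by nra; nra. }
  apply Rmult_le_reg_r with (1 - delta); [lra|].
  unfold Rdiv; rewrite Rmult_assoc, Rinv_l, Rmult_1_r by lra; nra.
Qed.

Lemma INR_eventually_gt c A : 0 < c -> exists N, forall x, (N <= x)%nat -> A < c * INR x.
Proof.
  intros Hc.
  destruct (proj2 (is_lim_seq_spec INR p_infty) is_lim_seq_INR (A / c)) as [N HN].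
  exists N; intros x Hx; specialize (HN x Hx).
  apply Rmult_lt_reg_r with (/ c); [apply Rinv_0_lt_compat; lra|].
  replace (c * INR x * / c) with (INR x) by (field; lra); exact HN.
Qed.

Lemma q_diag_le_eventually r eps : 1 < r -> 0 < eps ->
  exists N, forall x, (N <= x)%nat -> q r (S x) (S x) <= (r - 1) / (r + 1) + eps.
Proof.
  intros Hr Heps.
  destruct (fitter_term_le r eps Hr Heps) as [K [HK Hfit]].
  destruct (archimed_cor1 (eps / 4) ltac:(lra)) as [K' [HK'eps HK']].
  destruct (INR_eventually_gt 1 (INR K) ltac:(lra)) as [N1 HN1].
  destruct (INR_eventually_gt eps (8 * INR K) Heps) as [N2 HN2].
  destruct (INR_eventually_gt (r - 1) ((1 + r) * INR K') ltac:(lra)) as [N3 HN3].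
  exists (Nat.max N1 (Nat.max N2 N3)); intros x Hx.
  pose proof (HN1 (S x) ltac:(lia)); pose proof (HN2 (S x) ltac:(lia));
    pose proof (HN3 (S x) ltac:(lia)).
  eapply Rle_trans; [apply (q_diag_le r K K' x); (lra || lia)|].
  pose proof (Hfit (INR (S x)) ltac:(lra) ltac:(lra)).
  pose proof (ruin_one_le_inv ((1 + r) / 2) K' ltac:(lra) HK').
  pose proof (ruin_nonneg ((1 + r) / 2) K' 1 ltac:(lra)).
  assert (/ (r + 1) <= 1) by (rewrite <- Rinv_1; apply Rinv_le_contravar; lra).
  assert (0 <= / (r + 1)) by (left; apply Rinv_0_lt_compat; lra).
  nra.
Qed.

Theorem lemma3 (r : R) (hr : 1 < r) :
  is_lim_seq (fun x : nat => q r (S x) (S x)) ((r - 1) / (r + 1)).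
Proof.
  apply is_lim_seq_spec; intros eps.
  destruct (q_diag_le_eventually r (eps / 2) hr ltac:(pose proof (cond_pos eps); lra))
    as [N HN].
  exists N; intros x Hx.
  pose proof (q_diag_ge r (S x) hr ltac:(lia)); pose proof (HN x Hx).
  pose proof (cond_pos eps).
  rewrite Rabs_pos_eq; lra.
Qed.
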